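(* For real parameters $a,\epsilon$, let $Q_{a,\epsilon}$ be the region bounded by the segment from $(0,0)$ to $(1,0)$, the segment from $(0,0)$ to $(0,\tfrac12)$, the segment from $(1,0)$ to $(1,\tfrac12+a)$, and the curve $y(x)=\epsilon x^2+(a-\epsilon)x+\tfrac12$, $x\in[0,1]$. For $p,q$ near $\tfrac12$ and $\theta$ near $0$, let $\Gamma(p,q,\theta)$ be the circular arc of central angle $\theta$ joining $(q,0)$ and $(p,y(p))$, with radius $R=\frac{\sqrt{(q-p)^2+y(p)^2}}{2\sin(\theta/2)}$ (for $\theta=0$, the straight segment), and define $$A_{\mathrm{tot}}=\int_0^1 y(x)\,dx,\quad A_1=\int_0^p y(x)\,dx+\tfrac12 y(p)(q-p)+\tfrac12R^2\theta-\tfrac14\big[(q-p)^2+y(p)^2\big]\cot(\theta/2),\quad A_2=A_{\mathrm{tot}}-A_1,$$ (the left and right areas into which $\Gamma$ divides $Q_{a,\epsilon}$, with $\theta>0$ meaning the circular cap is added to the left region), and $$\mathrm{RC}(p,q,\theta;a,\epsilon)=\frac{R\,\theta}{A_1A_2}.$$ Then $\mathrm{RC}$ extends smoothly to a neighborhood of $(p,q,\theta;a,\epsilon)=(\tfrac12,\tfrac12,0;0,0)$; at $a=\epsilon=0$ the point $(p,q,\theta)=(\tfrac12,\tfrac12,0)$ is a nondegenerate local minimum with Hessian in the variables $(q,p,\theta)$ equal to $$\begin{pmatrix}48&-16&\tfrac43\\-16&48&\tfrac43\\ \tfrac43&\tfrac43&\tfrac79\end{pmatrix};$$ and for $\epsilon=0$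 and $a$ small, the critical point $(q,p,\theta)$ of $\mathrm{RC}(\cdot;a,0)$ near $(\tfrac12,\tfrac12,0)$ satisfies $$\Big(q-\tfrac12,\;p-\tfrac12,\;\theta\Big)=a\Big(\tfrac1{12},\;-\tfrac16,\;1\Big)+O(a^2).$$
   Context: $\mathrm{RC}$ is the Ratio Cut quotient $\mathcal H^1(\Gamma)/(|S|\,|Q\setminus S|)$ (length of the cut divided by the product of the two areas) restricted to circular-arc cuts parametrized by their endpoints $(q,0)$, $(p,y(p))$ and central angle $\theta$. *)

From Stdlib Require Import Reals Lra.
Open Scope R_scope.

Definition ycurve (a eps x : R) : R := eps * x ^ 2 + (a - eps) * x + / 2.

Lemma ycurve_cont (a eps : R) : continuity (ycurve a eps).
Proof. unfold ycurve. reg. Qed.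

Definition integ (f : R -> R) (Hf : continuity f) (u v : R) : R :=
  match Rle_dec u v with
  | left H => RiemannInt (continuity_implies_RiemannInt H (fun x _ => Hf x))
  | right H => - RiemannInt (continuity_implies_RiemannInt
                   (Rlt_le _ _ (Rnot_le_lt _ _ H)) (fun x _ => Hf x))
  end.

Definition yint (a eps u v : R) : R := integ (ycurve a eps) (ycurve_cont a eps) u v.

Definition Atot (a eps : R) : R := yint a eps 0 1.

Definition chord2 (a eps p q : R) : R := (q - p) ^ 2 + (ycurve a eps p) ^ 2.

Definition Rad (a eps p q th : R) : R := sqrt (chord2 a eps p q) / (2 * sin (th / 2)).

Definition arclen (p q th a eps : R) : R :=
  if Req_EM_T th 0 then sqrt (chord2 a eps p q) else Rad a eps p q th * th.

Definition A1 (p q th a eps : R) : R :=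
  if Req_EM_T th 0 then
    yint a eps 0 p + / 2 * ycurve a eps p * (q - p)
  else
    yint a eps 0 p + / 2 * ycurve a eps p * (q - p)
    + / 2 * (Rad a eps p q th) ^ 2 * th
    - / 4 * chord2 a eps p q * (cos (th / 2) / sin (th / 2)).

Definition A2 (p q th a eps : R) : R := Atot a eps - A1 p q th a eps.

Definition RC (p q th a eps : R) : R :=
  arclen p q th a eps / (A1 p q th a eps * A2 p q th a eps).

Record pt5 : Type := mk5 { cq : R; cp : R; cth : R; ca : R; ceps : R }.

Definition RCpt (x : pt5) : R := RC (cp x) (cq x) (cth x) (ca x) (ceps x).

Definition x0 : pt5 := mk5 (/ 2) (/ 2) 0 0 0.

Definition dist5 (x y : pt5) : R :=
  Rmax (Rabs (cq x - cq y)) (Rmax (Rabs (cp x - cp y)) (Rmax (Rabs (cth x - cth y))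
    (Rmax (Rabs (ca x - ca y)) (Rabs (ceps x - ceps y))))).

Definition open5 (U : pt5 -> Prop) : Prop :=
  forall x, U x -> exists d, 0 < d /\ forall y, dist5 x y < d -> U y.

Definition cont5_at (f : pt5 -> R) (x : pt5) : Prop :=
  forall e, 0 < e -> exists d, 0 < d /\ forall y, dist5 x y < d -> Rabs (f y - f x) < e.

Definition shift (i : nat) (h : R) (x : pt5) : pt5 :=
  match i with
  | 0%nat => mk5 (cq x + h) (cp x) (cth x) (ca x) (ceps x)
  | 1%nat => mk5 (cq x) (cp x + h) (cth x) (ca x) (ceps x)
  | 2%nat => mk5 (cq x) (cp x) (cth x + h) (ca x) (ceps x)
  | 3%nat => mk5 (cq x) (cp x) (cth x) (ca x + h) (ceps x)
  | _ => mk5 (cq x) (cp x) (cth x) (ca x) (ceps x + h)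
  end.

Definition partial (i : nat) (f : pt5 -> R) (x : pt5) (l : R) : Prop :=
  derivable_pt_lim (fun h => f (shift i h x)) 0 l.

Fixpoint Ck (k : nat) (U : pt5 -> Prop) (f : pt5 -> R) : Prop :=
  match k with
  | 0%nat => forall x, U x -> cont5_at f x
  | S k' => (forall x, U x -> cont5_at f x) /\
            exists D : nat -> pt5 -> R,
              (forall i x, (i < 5)%nat -> U x -> partial i f x (D i x)) /\
              (forall i, (i < 5)%nat -> Ck k' U (D i))
  end.

Definition smooth_on (U : pt5 -> Prop) (f : pt5 -> R) : Prop := forall k, Ck k U f.

Definition Hess (i j : nat) : R :=
  match i, j with
  | 0%nat, 0%nat => 48 | 0%nat, 1%nat => -16 | 0%nat, 2%nat => 4 / 3
  | 1%nat, 0%nat => -16 | 1%nat, 1%nat => 48 | 1%nat, 2%nat => 4 / 3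
  | 2%nat, 0%nat => 4 / 3 | 2%nat, 1%nat => 4 / 3 | 2%nat, 2%nat => 7 / 9
  | _, _ => 0
  end.

Definition crit_a (a : R) (x : pt5) : Prop :=
  ca x = a /\ ceps x = 0 /\ forall i, (i < 3)%nat -> partial i RCpt x 0.

(* Since sin(θ/2) = (θ/2) S(θ²/4) and θ − sin θ = θ³ T(θ²) with entire S, T and S(0) = 1,
   the arc length and the circular cap are analytic through θ = 0, and RC becomes a composite
   of field operations, √ and derivatives of S and T, defined wherever no denominator or
   square-root argument vanishes; this includes (½, ½, 0; 0, 0), where RC = 8.  Reifying such
   composites as terms with a symbolic partial derivative gives smoothness, and evaluating
   those terms exactly in ℚ at the base point gives a vanishing gradient in (q, p, θ) and the
   positive definite Hessian [Hess]; Taylor's formula with second derivatives kept close to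
   [Hess] gives the local minimum.  For small a the map x ↦ x − Hess⁻¹ ∇RC(x) is a
   ½-contraction of a ball in the slice {a fixed, ε = 0}, so its fixed point is the unique
   nearby critical point; the gradient at the first-order ansatz (½ + a/12, ½ − a/6, a) is
   O(a²) by Taylor's formula, so by contraction the critical point lies within O(a²) of it. *)

From Coquelicot Require Import Coquelicot.
From Stdlib Require Import Reals Lra Lia QArith Qreals List.
Open Scope R_scope.

(** * Power series of sine *)

Definition sinc_coef (n : nat) : R := sin_n n.
Definition sin_defect_coef (n : nat) : R := - sin_n (S n).

Definition sin_ps_coef (k : nat) : nat -> R :=
  match k with O => sinc_coef | _ => sin_defect_coef end.

Lemma CV_radius_sin_ps_coef k : CV_radius (sin_ps_coef k) = p_infty.
Proof.
  apply CV_radius_infinite_DAlembert; destruct k as [|k]; simpl.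
  - intro n; apply sin_no_R0.
  - intro n; apply Ropp_neq_0_compat, sin_no_R0.
  - apply is_lim_seq_Reals, Alembert_sin.
  - apply is_lim_seq_Reals. intros e He.
    destruct (Alembert_sin e He) as [N HN]. exists N. intros n Hn.
    unfold sin_defect_coef.
    replace (- sin_n (S (S n)) / - sin_n (S n)) with (sin_n (S (S n)) / sin_n (S n))
      by (field; apply sin_no_R0).
    apply HN. lia.
Qed.

Fixpoint PS_derive_iter (a : nat -> R) (n : nat) : nat -> R :=
  match n with O => a | S m => PS_derive (PS_derive_iter a m) end.

Lemma CV_radius_derive_iter a n :
  CV_radius a = p_infty -> CV_radius (PS_derive_iter a n) = p_infty.
Proof. intro H; induction n; simpl; auto. rewrite CV_radius_derive; auto. Qed.

(* [sin_ps 0 n] and [sin_ps 1 n] are the n-th derivatives of the entire functions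
   S and T with sin x = x S(x²) and x - sin x = x³ T(x²). *)
Definition sin_ps (k n : nat) (z : R) : R := PSeries (PS_derive_iter (sin_ps_coef k) n) z.

Lemma sin_ps_derive k n z : derivable_pt_lim (sin_ps k n) z (sin_ps k (S n) z).
Proof.
  apply is_derive_Reals, is_derive_PSeries.
  rewrite CV_radius_derive_iter by apply CV_radius_sin_ps_coef. exact I.
Qed.

Lemma sin_ps_continuity_pt k n z : continuity_pt (sin_ps k n) z.
Proof. apply derivable_continuous_pt. exists (sin_ps k (S n) z). apply sin_ps_derive. Qed.

Lemma sin_sinc x : sin x = x * sin_ps 0 0 (x * x).
Proof.
  unfold sin. destruct (exist_sin (Rsqr x)) as [l Hl]. f_equal. symmetry.
  apply is_pseries_unique, is_series_Reals. unfold sin_in, Rsqr in Hl.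
  intros e He. destruct (Hl e He) as [N HN]. exists N. intros n Hn.
  erewrite sum_eq; [apply HN; exact Hn|].
  intros i _. cbn. unfold scal; simpl; unfold mult; simpl. apply Rmult_comm.
Qed.

Lemma sinc_defect z : sin_ps 0 0 z = 1 - z * sin_ps 1 0 z.
Proof.
  unfold sin_ps; simpl.
  rewrite (PSeries_decr_1 sinc_coef z)
    by (apply CV_radius_inside; change sinc_coef with (sin_ps_coef 0);
        rewrite CV_radius_sin_ps_coef; exact I).
  change sin_defect_coef with (PS_opp (PS_decr_1 sinc_coef)). rewrite PSeries_opp.
  replace (sinc_coef 0%nat) with 1 by (unfold sinc_coef, sin_n; simpl; field). ring.
Qed.

Lemma sin_defect x : x - sin x = x * x * x * sin_ps 1 0 (x * x).
Proof. rewrite sin_sinc, sinc_defect. ring. Qed.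

Definition ycurve_prim (a eps x : R) : R := eps * x ^ 3 / 3 + (a - eps) * x ^ 2 / 2 + x / 2.

Lemma is_RInt_ycurve a eps u v :
  is_RInt (ycurve a eps) u v (ycurve_prim a eps v - ycurve_prim a eps u).
Proof.
  apply (is_RInt_derive (ycurve_prim a eps)).
  - intros x _. unfold ycurve_prim, ycurve. auto_derive; auto. field.
  - intros x _. apply continuity_pt_filterlim, ycurve_cont.
Qed.

Lemma yint_prim a eps u v : yint a eps u v = ycurve_prim a eps v - ycurve_prim a eps u.
Proof.
  unfold yint, integ. destruct (Rle_dec u v); rewrite <- RInt_Reals.
  - exact (is_RInt_unique _ _ _ _ (is_RInt_ycurve a eps u v)).
  - rewrite (is_RInt_unique _ _ _ _ (is_RInt_ycurve a eps v u)). ring.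
Qed.

(** * Terms, their derivatives and their regularity *)

Inductive expr : Type :=
| Zero | One | Cst (c : Q) | Var (j : nat) | Add (u v : expr) | Mul (u v : expr)
| Neg (u : expr) | Inv (u : expr) | Sqrt (u : expr) | Ser (k n : nat) (u : expr).

(* All indices j >= 4 read the ε-coordinate, as in [shift]. *)
Definition coord (j : nat) (x : pt5) : R :=
  match j with 0%nat => cq x | 1%nat => cp x | 2%nat => cth x | 3%nat => ca x | _ => ceps x end.

Definition coord_idx (j : nat) : nat :=
  match j with 0%nat => 0 | 1%nat => 1 | 2%nat => 2 | 3%nat => 3 | _ => 4 end.

Fixpoint eval (e : expr) (x : pt5) : R :=
  match e with
  | Zero => 0 | One => 1 | Cst c => Q2R c | Var j => coord j x
  | Add u v => eval u x + eval v x | Mul u v => eval u x * eval v x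
  | Neg u => - eval u x | Inv u => / eval u x | Sqrt u => sqrt (eval u x)
  | Ser k n u => sin_ps k n (eval u x)
  end.

Fixpoint dom (e : expr) (x : pt5) : Prop :=
  match e with
  | Add u v | Mul u v => dom u x /\ dom v x
  | Neg u | Ser _ _ u => dom u x
  | Inv u => dom u x /\ eval u x <> 0
  | Sqrt u => dom u x /\ 0 < eval u x
  | _ => True
  end.

(* Smart constructors dropping zeros and ones: they keep the iterated symbolic derivatives
   of RC small enough to compute with. *)
Definition add' (u v : expr) : expr :=
  match u with Zero => v | _ => match v with Zero => u | _ => Add u v end end.
Definition mul' (u v : expr) : expr :=
  match u with
  | Zero => Zero | One => v
  | _ => match v with Zero => Zero | One => u | _ => Mul u v end
  end.
Definition neg' (u : expr) : expr := match u with Zero => Zero | _ => Neg u end.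

Lemma eval_add' u v x : eval (add' u v) x = eval u x + eval v x.
Proof. destruct u, v; simpl; ring. Qed.
Lemma eval_mul' u v x : eval (mul' u v) x = eval u x * eval v x.
Proof. destruct u, v; simpl; ring. Qed.
Lemma eval_neg' u x : eval (neg' u) x = - eval u x.
Proof. destruct u; simpl; ring. Qed.
Lemma dom_add' u v x : dom u x -> dom v x -> dom (add' u v) x.
Proof. destruct u, v; simpl; tauto. Qed.
Lemma dom_mul' u v x : dom u x -> dom v x -> dom (mul' u v) x.
Proof. destruct u, v; simpl; tauto. Qed.
Lemma dom_neg' u x : dom u x -> dom (neg' u) x.
Proof. destruct u; simpl; tauto. Qed.

Fixpoint deriv (i : nat) (e : expr) : expr :=
  match e with
  | Zero | One | Cst _ => Zero
  | Var j => if Nat.eqb (coord_idx i) (coord_idx j) then One else Zero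
  | Add u v => add' (deriv i u) (deriv i v)
  | Mul u v => add' (mul' (deriv i u) v) (mul' u (deriv i v))
  | Neg u => neg' (deriv i u)
  | Inv u => neg' (mul' (deriv i u) (Mul (Inv u) (Inv u)))
  | Sqrt u => mul' (deriv i u) (Inv (Mul (Add One One) (Sqrt u)))
  | Ser k n u => mul' (deriv i u) (Ser k (S n) u)
  end.

Lemma dom_deriv i e x : dom e x -> dom (deriv i e) x.
Proof.
  induction e; simpl; intros; try tauto.
  - destruct (Nat.eqb _ _); exact I.
  - apply dom_add'; tauto.
  - apply dom_add'; apply dom_mul'; tauto.
  - apply dom_neg'; tauto.
  - apply dom_neg', dom_mul'; simpl; tauto.
  - apply dom_mul'; simpl; [tauto|]. split; [tauto|].
    apply Rgt_not_eq, Rmult_lt_0_compat; [lra|]. apply sqrt_lt_R0; tauto.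
  - apply dom_mul'; simpl; tauto.
Qed.

Definition line (x h : pt5) (t : R) : pt5 :=
  mk5 (cq x + t * cq h) (cp x + t * cp h) (cth x + t * cth h) (ca x + t * ca h)
      (ceps x + t * ceps h).

Lemma coord_line j x h t : coord j (line x h t) = coord j x + t * coord j h.
Proof. destruct j as [|[|[|[|j]]]]; reflexivity. Qed.

Lemma line0 x h : line x h 0 = x.
Proof. destruct x; unfold line; simpl; f_equal; ring. Qed.

Definition ddir (e : expr) (y h : pt5) : R :=
  coord 0 h * eval (deriv 0 e) y + coord 1 h * eval (deriv 1 e) y
  + coord 2 h * eval (deriv 2 e) y + coord 3 h * eval (deriv 3 e) y
  + coord 4 h * eval (deriv 4 e) y.

Lemma derivable_pt_lim_eq (f g : R -> R) t l l' :
  (forall s, f s = g s) -> l = l' -> derivable_pt_lim f t l -> derivable_pt_lim g t l'.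
Proof.
  intros H <- Hd e He. destruct (Hd e He) as [d Hd']. exists d.
  intros h Hh Hh'. rewrite <- !H. auto.
Qed.

Lemma eval_line_derive e x h t : dom e (line x h t) ->
  derivable_pt_lim (fun s => eval e (line x h s)) t (ddir e (line x h t) h).
Proof.
  induction e; simpl; intro Hd.
  - eapply derivable_pt_lim_eq; [| |apply (derivable_pt_lim_const 0 t)]; [reflexivity|].
    unfold ddir; simpl; ring.
  - eapply derivable_pt_lim_eq; [| |apply (derivable_pt_lim_const 1 t)]; [reflexivity|].
    unfold ddir; simpl; ring.
  - eapply derivable_pt_lim_eq; [| |apply (derivable_pt_lim_const (Q2R c) t)]; [reflexivity|].
    unfold ddir; simpl; ring.
  - apply derivable_pt_lim_eq with (fun s => coord j x + s * coord j h) (coord j h).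
    + intro s; symmetry; apply coord_line.
    + unfold ddir. destruct j as [|[|[|[|j]]]]; simpl; ring.
    + apply is_derive_Reals. auto_derive; auto. ring.
  - eapply derivable_pt_lim_eq;
      [| |apply derivable_pt_lim_plus; [apply IHe1|apply IHe2]; tauto]; [reflexivity|].
    unfold ddir; simpl deriv; rewrite !eval_add'; ring.
  - eapply derivable_pt_lim_eq;
      [| |apply derivable_pt_lim_mult; [apply IHe1|apply IHe2]; tauto]; [reflexivity|].
    unfold ddir; simpl deriv; rewrite !eval_add', !eval_mul'; ring.
  - eapply derivable_pt_lim_eq; [| |apply derivable_pt_lim_opp; apply IHe; tauto];
      [reflexivity|].
    unfold ddir; simpl deriv; rewrite !eval_neg'; ring.
  - eapply derivable_pt_lim_eq; [reflexivity| |].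
    2: { apply is_derive_Reals, is_derive_inv; [apply is_derive_Reals, IHe|]; tauto. }
    unfold ddir; simpl deriv; rewrite !eval_neg', !eval_mul'. simpl eval. field. tauto.
  - eapply derivable_pt_lim_eq with (f := comp sqrt (fun s => eval e (line x h s)));
      [reflexivity| |].
    2: { apply derivable_pt_lim_comp; [apply IHe|apply derivable_pt_lim_sqrt]; tauto. }
    unfold ddir; simpl deriv; rewrite !eval_mul'. simpl eval. field.
    apply Rgt_not_eq, sqrt_lt_R0; tauto.
  - eapply derivable_pt_lim_eq with (f := comp (sin_ps k n) (fun s => eval e (line x h s)));
      [reflexivity| |].
    2: { apply derivable_pt_lim_comp; [apply IHe; tauto|apply sin_ps_derive]. }
    unfold ddir; simpl deriv; rewrite !eval_mul'. simpl eval. ring.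
Qed.

Lemma coord_dist j x y : Rabs (coord j x - coord j y) <= dist5 x y.
Proof.
  unfold dist5. destruct j as [|[|[|[|j]]]]; simpl;
    repeat (apply Rle_refl || apply Rmax_l || (eapply Rle_trans; [|apply Rmax_r])).
Qed.

Lemma dist5_le x y d :
  Rabs (cq x - cq y) <= d -> Rabs (cp x - cp y) <= d -> Rabs (cth x - cth y) <= d ->
  Rabs (ca x - ca y) <= d -> Rabs (ceps x - ceps y) <= d -> dist5 x y <= d.
Proof. intros; unfold dist5; repeat apply Rmax_lub; auto. Qed.

Lemma dist5_nonneg x y : 0 <= dist5 x y.
Proof. apply Rle_trans with (Rabs (coord 0 x - coord 0 y)); [apply Rabs_pos|apply coord_dist]. Qed.

Lemma dist5_refl x : dist5 x x = 0.
Proof.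
  apply Rle_antisym; [|apply dist5_nonneg].
  apply dist5_le; rewrite Rminus_diag, Rabs_R0; lra.
Qed.

Lemma dist5_sym x y : dist5 x y = dist5 y x.
Proof.
  unfold dist5. rewrite (Rabs_minus_sym (cq x)), (Rabs_minus_sym (cp x)),
    (Rabs_minus_sym (cth x)), (Rabs_minus_sym (ca x)), (Rabs_minus_sym (ceps x)).
  reflexivity.
Qed.

Lemma dist5_triang x y z : dist5 x z <= dist5 x y + dist5 y z.
Proof.
  assert (Htri : forall j, Rabs (coord j x - coord j z) <= dist5 x y + dist5 y z).
  { intro j. replace (coord j x - coord j z)
      with ((coord j x - coord j y) + (coord j y - coord j z)) by ring.
    eapply Rle_trans; [apply Rabs_triang|].
    apply Rplus_le_compat; apply coord_dist. }
  apply dist5_le; [apply (Htri 0%nat)|apply (Htri 1%nat)|apply (Htri 2%nat)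
    |apply (Htri 3%nat)|apply (Htri 4%nat)].
Qed.

Lemma dist5_le0_eq x y : dist5 x y <= 0 -> x = y.
Proof.
  intro H. destruct x as [q1 p1 t1 a1 e1], y as [q2 p2 t2 a2 e2].
  assert (Hc : forall j u v, coord j (mk5 q1 p1 t1 a1 e1) = u ->
                 coord j (mk5 q2 p2 t2 a2 e2) = v -> u = v).
  { intros j u v <- <-. apply Rminus_diag_uniq, Rabs_eq_0.
    apply Rle_antisym; [|apply Rabs_pos]. eapply Rle_trans; [apply coord_dist|exact H]. }
  f_equal; [apply (Hc 0%nat)|apply (Hc 1%nat)|apply (Hc 2%nat)|apply (Hc 3%nat)
    |apply (Hc 4%nat)]; reflexivity.
Qed.

Lemma dist5_shift i h x : (i < 5)%nat -> dist5 x (shift i h x) <= Rabs h.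
Proof.
  intro Hi. apply dist5_le; destruct i as [|[|[|[|[|i]]]]]; try lia; simpl;
    first [rewrite Rminus_diag, Rabs_R0; apply Rabs_pos
          |replace (_ - _) with (- h) by ring; rewrite Rabs_Ropp; lra].
Qed.

Definition diff (x y : pt5) : pt5 :=
  mk5 (cq x - cq y) (cp x - cp y) (cth x - cth y) (ca x - ca y) (ceps x - ceps y).

Lemma coord_diff j x y : coord j (diff x y) = coord j x - coord j y.
Proof. destruct j as [|[|[|[|j]]]]; reflexivity. Qed.

Lemma line_diff1 x y : line y (diff x y) 1 = x.
Proof. destruct x, y; unfold line, diff; simpl; f_equal; ring. Qed.

Lemma dist5_line_convex z x y r t : dist5 x z <= r -> dist5 y z <= r -> 0 <= t <= 1 ->
  dist5 (line y (diff x y) t) z <= r.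
Proof.
  intros Hx Hy Ht.
  assert (Hconv : forall j, Rabs (coord j y + t * (coord j x - coord j y) - coord j z) <= r).
  { intro j.
    replace (coord j y + t * (coord j x - coord j y) - coord j z)
      with ((1 - t) * (coord j y - coord j z) + t * (coord j x - coord j z)) by ring.
    eapply Rle_trans; [apply Rabs_triang|].
    rewrite !Rabs_mult, (Rabs_right (1 - t)), (Rabs_right t) by lra.
    pose proof (Rle_trans _ _ _ (coord_dist j x z) Hx).
    pose proof (Rle_trans _ _ _ (coord_dist j y z) Hy). nra. }
  apply dist5_le; [apply (Hconv 0%nat)|apply (Hconv 1%nat)|apply (Hconv 2%nat)
    |apply (Hconv 3%nat)|apply (Hconv 4%nat)].
Qed.

Definition nbhd (P : pt5 -> Prop) (x : pt5) : Prop :=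
  exists d, 0 < d /\ forall y, dist5 x y < d -> P y.

Lemma nbhd_and P P' x : nbhd P x -> nbhd P' x -> nbhd (fun y => P y /\ P' y) x.
Proof.
  intros [d1 [H1 H1']] [d2 [H2 H2']]. exists (Rmin d1 d2); split; [apply Rmin_pos; auto|].
  intros y Hy; split; [apply H1'|apply H2'];
    eapply Rlt_le_trans; eauto; [apply Rmin_l|apply Rmin_r].
Qed.

Lemma cont5_const c x : cont5_at (fun _ => c) x.
Proof.
  intros e He; exists 1; split; [lra|]. intros; rewrite Rminus_diag, Rabs_R0; auto.
Qed.

Lemma cont5_coord j x : cont5_at (coord j) x.
Proof.
  intros e He; exists e; split; auto; intros y Hy.
  rewrite Rabs_minus_sym. eapply Rle_lt_trans; [apply coord_dist|exact Hy].
Qed.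

Lemma cont5_plus f g x : cont5_at f x -> cont5_at g x -> cont5_at (fun y => f y + g y) x.
Proof.
  intros Hf Hg e He.
  destruct (nbhd_and _ _ x (Hf (e / 2) ltac:(lra)) (Hg (e / 2) ltac:(lra)))
    as [d [Hd Hd']].
  exists d; split; auto. intros y Hy. destruct (Hd' y Hy).
  replace (f y + g y - (f x + g x)) with ((f y - f x) + (g y - g x)) by ring.
  eapply Rle_lt_trans; [apply Rabs_triang|]. lra.
Qed.

Lemma cont5_comp (phi : R -> R) f x :
  continuity_pt phi (f x) -> cont5_at f x -> cont5_at (fun y => phi (f y)) x.
Proof.
  intros Hp Hf e He. destruct (Hp e He) as [d1 [H1 H1']].
  destruct (Hf d1 H1) as [d [Hd Hd']]. exists d; split; auto. intros y Hy.
  destruct (Req_dec (f y) (f x)) as [->|Hne].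
  - rewrite Rminus_diag, Rabs_R0; auto.
  - apply (H1' (f y)). split; [split; [exact I|auto]|exact (Hd' y Hy)].
Qed.

Lemma cont5_mult f g x : cont5_at f x -> cont5_at g x -> cont5_at (fun y => f y * g y) x.
Proof.
  intros Hf Hg.
  assert (Hsq : forall u, cont5_at u x -> cont5_at (fun y => u y * u y) x).
  { intros u Hu. apply (cont5_comp (fun w => w * w)); auto.
    apply continuity_pt_mult; apply derivable_continuous_pt, derivable_pt_id. }
  assert (Hneg : cont5_at (fun y => - g y) x).
  { apply (cont5_comp Ropp); auto.
    apply continuity_pt_opp, derivable_continuous_pt, derivable_pt_id. }
  (* polarization: 4 f g = (f + g)² - (f - g)² *)
  assert (H : cont5_at (fun y => / 4 * ((f y + g y) * (f y + g y))
                                 + - / 4 * ((f y + - g y) * (f y + - g y))) x).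
  { assert (Hscal : forall c u, cont5_at u x -> cont5_at (fun y => c * u y) x).
    { intros c u Hu. apply (cont5_comp (fun w => c * w)); auto.
      apply continuity_pt_mult; [apply continuity_pt_const; intros ? ?; reflexivity|].
      apply derivable_continuous_pt, derivable_pt_id. }
    apply cont5_plus; apply Hscal, Hsq, cont5_plus; auto. }
  intros e He. destruct (H e He) as [d [Hd Hd']]. exists d; split; auto. intros y Hy.
  specialize (Hd' y Hy). cbv beta in Hd'.
  match type of Hd' with Rabs ?u < _ => replace (f y * g y - f x * g x) with u by field end.
  exact Hd'.
Qed.

Lemma eval_cont5 e x : dom e x -> cont5_at (eval e) x.
Proof.
  induction e; simpl; intro Hd.
  - apply cont5_const.
  - apply cont5_const.
  - apply cont5_const.
  - apply cont5_coord.
  - apply cont5_plus; [apply IHe1|apply IHe2]; tauto.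
  - apply cont5_mult; [apply IHe1|apply IHe2]; tauto.
  - apply (cont5_comp Ropp); [|apply IHe; tauto].
    apply continuity_pt_opp, derivable_continuous_pt, derivable_pt_id.
  - apply (cont5_comp Rinv); [|apply IHe; tauto].
    apply (continuity_pt_inv (fun w => w)); [|tauto].
    apply derivable_continuous_pt, derivable_pt_id.
  - apply (cont5_comp sqrt); [apply sqrt_continuity_pt|apply IHe]; tauto.
  - apply (cont5_comp (sin_ps k n)); [apply sin_ps_continuity_pt|apply IHe; tauto].
Qed.

Lemma nbhd_sign f x : cont5_at f x -> f x <> 0 ->
  nbhd (fun y => f y <> 0 /\ (0 < f x -> 0 < f y)) x.
Proof.
  intros Hc Hn. destruct (Hc (Rabs (f x)) (Rabs_pos_lt _ Hn)) as [d [Hd Hd']].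
  exists d; split; auto. intros y Hy. specialize (Hd' y Hy).
  destruct (Rle_or_lt 0 (f x)).
  - rewrite (Rabs_right (f x)) in Hd' by lra.
    apply Rabs_def2 in Hd'. split; intros; lra.
  - rewrite (Rabs_left (f x)) in Hd' by lra.
    apply Rabs_def2 in Hd'. split; intros; lra.
Qed.

Lemma dom_nbhd e x : dom e x -> nbhd (dom e) x.
Proof.
  induction e; simpl; intro Hd; try (exists 1; split; [lra|auto]; fail).
  - apply nbhd_and; tauto.
  - apply nbhd_and; tauto.
  - auto.
  - destruct (nbhd_and _ _ x (IHe (proj1 Hd))
                (nbhd_sign _ _ (eval_cont5 e x (proj1 Hd)) (proj2 Hd))) as [d [H1 H2]].
    exists d; split; auto. intros y Hy; split; apply H2; auto.
  - destruct (nbhd_and _ _ x (IHe (proj1 Hd))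
                (nbhd_sign _ _ (eval_cont5 e x (proj1 Hd)) (Rgt_not_eq _ _ (proj2 Hd))))
      as [d [H1 H2]].
    exists d; split; auto. intros y Hy; split; apply H2; tauto.
  - auto.
Qed.

Lemma dom_open5 e : open5 (dom e).
Proof. intros x Hx. apply dom_nbhd, Hx. Qed.

Definition unitv (i : nat) : pt5 := shift i 1 (mk5 0 0 0 0 0).

Lemma shift_line i h x : shift i h x = line x (unitv i) h.
Proof. destruct x; destruct i as [|[|[|[|i]]]]; unfold line, shift, unitv; simpl; f_equal; ring. Qed.

Lemma ddir_unitv e x i : (i < 5)%nat -> ddir e x (unitv i) = eval (deriv i e) x.
Proof. intro Hi. destruct i as [|[|[|[|[|i]]]]]; try lia; unfold ddir; simpl; ring. Qed.

Lemma partial_eval i e x :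
  (i < 5)%nat -> dom e x -> partial i (eval e) x (eval (deriv i e) x).
Proof.
  intros Hi Hd. unfold partial.
  apply derivable_pt_lim_eq with (fun s => eval e (line x (unitv i) s))
    (ddir e (line x (unitv i) 0) (unitv i)).
  - intro s. rewrite shift_line. reflexivity.
  - rewrite line0. apply ddir_unitv, Hi.
  - apply eval_line_derive. rewrite line0. exact Hd.
Qed.

Lemma eval_Ck k e U : (forall x, U x -> dom e x) -> Ck k U (eval e).
Proof.
  revert e. induction k; intros e HU; simpl.
  - intros x Hx; apply eval_cont5; auto.
  - split; [intros x Hx; apply eval_cont5; auto|].
    exists (fun i => eval (deriv i e)). split.
    + intros i x Hi Hx. apply partial_eval; auto.
    + intros i _. apply IHk. intros x Hx. apply dom_deriv; auto.
Qed.

Lemma derivable_pt_lim_local (f g : R -> R) t l r : 0 < r ->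
  (forall s, Rabs (s - t) < r -> f s = g s) ->
  derivable_pt_lim f t l -> derivable_pt_lim g t l.
Proof.
  intros Hr H Hd e He. destruct (Hd e He) as [d Hd'].
  assert (Hm : 0 < Rmin d r) by (apply Rmin_pos; [apply cond_pos|auto]).
  exists (mkposreal _ Hm). intros h Hh Hh'. simpl in Hh'.
  rewrite <- !H.
  - apply Hd'; auto. eapply Rlt_le_trans; [exact Hh'|apply Rmin_l].
  - rewrite Rminus_diag, Rabs_R0; auto.
  - replace (t + h - t) with h by ring. eapply Rlt_le_trans; [exact Hh'|apply Rmin_r].
Qed.

Section LocalEquality.

Variables (U : pt5 -> Prop) (f g : pt5 -> R).
Hypothesis U_open : open5 U.
Hypothesis f_eq_g : forall x, U x -> f x = g x.

Lemma cont5_local x : U x -> cont5_at f x -> cont5_at g x.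
Proof.
  intros Hx Hf e He. destruct (nbhd_and _ _ x (U_open x Hx) (Hf e He)) as [d [Hd Hd']].
  exists d; split; auto. intros y Hy. destruct (Hd' y Hy).
  rewrite <- !f_eq_g; auto.
Qed.

Lemma partial_local i x l : (i < 5)%nat -> U x -> partial i f x l -> partial i g x l.
Proof.
  intros Hi Hx Hp. destruct (U_open x Hx) as [d [Hd Hd']].
  apply derivable_pt_lim_local with (fun h => f (shift i h x)) d; auto.
  intros s Hs. apply f_eq_g, Hd'. eapply Rle_lt_trans; [apply dist5_shift; auto|].
  rewrite Rminus_0_r in Hs; auto.
Qed.

Lemma Ck_local k : Ck k U f -> Ck k U g.
Proof.
  destruct k; simpl.
  - intros Hf x Hx. apply cont5_local; auto.
  - intros [Hf [D [HD HD']]]. split; [intros x Hx; apply cont5_local; auto|].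
    exists D; split; auto. intros i x Hi Hx. apply partial_local; auto.
Qed.

End LocalEquality.

Definition sub (u v : expr) : expr := Add u (Neg v).
Definition vq := Var 0.
Definition vp := Var 1.
Definition vth := Var 2.
Definition va := Var 3.
Definition veps := Var 4.

Definition ey : expr :=
  Add (Add (Mul veps (Mul vp vp)) (Mul (sub va veps) vp)) (Cst (1#2)).
Definition echord2 : expr := Add (Mul (sub vq vp) (sub vq vp)) (Mul ey ey).
Definition eS : expr := Ser 0 0 (Mul (Mul vth vth) (Cst (1#4))).
Definition eT : expr := Ser 1 0 (Mul vth vth).
(* Since sin(θ/2) = (θ/2) S(θ²/4), the arc length is R θ = √chord² / S(θ²/4), and the
   circular cap ½ R² θ − ¼ chord² cot(θ/2) = chord² (θ − sin θ) / (8 sin²(θ/2)) equals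
   chord² · θ T(θ²) / (2 S(θ²/4)²): both are analytic through θ = 0. *)
Definition earclen : expr := Mul (Sqrt echord2) (Inv eS).
Definition ecap : expr := Mul (Mul vth eT) (Inv (Mul (Mul (Cst 2) eS) eS)).
Definition eyprim : expr :=
  Add (Add (Mul (Mul veps (Mul vp (Mul vp vp))) (Cst (1#3)))
           (Mul (Mul (sub va veps) (Mul vp vp)) (Cst (1#2))))
      (Mul vp (Cst (1#2))).
Definition eA1 : expr :=
  Add (Add eyprim (Mul (Mul (Cst (1#2)) ey) (sub vq vp))) (Mul echord2 ecap).
Definition eAtot : expr :=
  Add (Add (Mul veps (Cst (1#3))) (Mul (sub va veps) (Cst (1#2)))) (Cst (1#2)).
Definition eA2 : expr := sub eAtot eA1.
Definition eRC : expr := Mul earclen (Inv (Mul eA1 eA2)).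

Lemma Q2R_half : Q2R (1#2) = / 2. Proof. unfold Q2R; simpl; field. Qed.
Lemma Q2R_quarter : Q2R (1#4) = / 4. Proof. unfold Q2R; simpl; field. Qed.
Lemma Q2R_third : Q2R (1#3) = / 3. Proof. unfold Q2R; simpl; field. Qed.
Lemma Q2R_two : Q2R 2 = 2. Proof. unfold Q2R; simpl; field. Qed.

Ltac eval_RC_terms :=
  cbn [eval coord cq cp cth ca ceps eRC earclen eA1 eA2 eAtot eyprim ecap echord2 ey eS eT
       sub vq vp vth va veps];
  rewrite ?Q2R_half, ?Q2R_quarter, ?Q2R_third, ?Q2R_two.

Lemma chord2_eval q p th a eps : chord2 a eps p q = eval echord2 (mk5 q p th a eps).
Proof. unfold chord2, ycurve. eval_RC_terms. ring. Qed.

Lemma sin_half_S th : sin (th / 2) = th / 2 * sin_ps 0 0 (th * th * / 4).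
Proof. rewrite sin_sinc. f_equal. f_equal. field. Qed.

Lemma arclen_eval q p th a eps : sin_ps 0 0 (th * th * / 4) <> 0 ->
  arclen p q th a eps = eval earclen (mk5 q p th a eps).
Proof.
  intro HS. unfold arclen, Rad. rewrite (chord2_eval q p th a eps). unfold earclen.
  cbn [eval]. set (c2 := eval echord2 _). unfold eS. eval_RC_terms.
  destruct (Req_EM_T th 0) as [->|Hth].
  - replace (0 * 0 * / 4) with 0 by ring. rewrite sinc_defect. field.
  - rewrite sin_half_S. field. auto.
Qed.

Lemma A1_eval q p th a eps : sin_ps 0 0 (th * th * / 4) <> 0 ->
  A1 p q th a eps = eval eA1 (mk5 q p th a eps).
Proof.
  intro HS. unfold A1, Rad. rewrite yint_prim, (chord2_eval q p th a eps). unfold eA1.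
  cbn [eval]. set (c2 := eval echord2 _).
  assert (Hc2 : 0 <= c2).
  { unfold c2; eval_RC_terms. apply Rplus_le_le_0_compat; apply Rle_0_sqr. }
  unfold ecap, eyprim, ey, eS, eT. eval_RC_terms. unfold ycurve_prim, ycurve.
  destruct (Req_EM_T th 0) as [->|Hth]; [rewrite !Rmult_0_l; field|].
  set (S := sin_ps 0 0 (th * th * / 4)) in *. set (T := sin_ps 1 0 (th * th)).
  assert (Hs : sin (th / 2) = th / 2 * S) by apply sin_half_S.
  assert (Hsn : sin (th / 2) <> 0).
  { rewrite Hs. apply Rmult_integral_contrapositive. split; auto. lra. }
  assert (Hcos : cos (th / 2) = (th - th * th * th * T) / (2 * sin (th / 2))).
  { assert (Hdouble : sin th = 2 * sin (th / 2) * cos (th / 2)).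
    { rewrite <- sin_2a. f_equal. field. }
    unfold T. rewrite <- sin_defect, Hdouble. field. auto. }
  assert (Hsq : sqrt c2 ^ 2 = c2) by (rewrite pow2_sqrt; auto).
  replace ((sqrt c2 / (2 * sin (th / 2))) ^ 2) with (c2 / (2 * sin (th / 2)) ^ 2)
    by (rewrite <- Hsq at 1; field; auto).
  rewrite Hcos, Hs. field. split; auto.
Qed.

Lemma Atot_eval q p th a eps : Atot a eps = eval eAtot (mk5 q p th a eps).
Proof. unfold Atot. rewrite yint_prim. unfold ycurve_prim. eval_RC_terms. field. Qed.

Lemma RCpt_eval x : dom eRC x -> RCpt x = eval eRC x.
Proof.
  intro Hd. destruct x as [q p th a eps].
  assert (HS : sin_ps 0 0 (th * th * / 4) <> 0).
  { revert Hd. unfold eRC, earclen, eS. cbn [dom]. eval_RC_terms. tauto. }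
  unfold RCpt, RC, A2. cbn [cq cp cth ca ceps].
  rewrite arclen_eval, A1_eval, (Atot_eval q p th a eps) by auto. reflexivity.
Qed.

(** * Exact derivatives at the base point *)

Definition sin_psQ0 (k n : nat) : option Q :=
  match k, n with
  | 0%nat, 0%nat => Some 1%Q | 0%nat, 1%nat => Some (-1#6) | 0%nat, 2%nat => Some (1#60)
  | 1%nat, 0%nat => Some (1#6) | 1%nat, 1%nat => Some (-1#120) | 1%nat, 2%nat => Some (1#2520)
  | _, _ => None
  end.

Definition coordQ0 (j : nat) : Q := match j with 0%nat | 1%nat => 1#2 | _ => 0%Q end.

(* A partial evaluator at x0 in exact arithmetic: square roots are only taken of 1/4 and
   the series only evaluated at 0, which is all that RC and its derivatives need there. *)
Fixpoint evalQ0 (e : expr) : option Q :=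
  match e with
  | Zero => Some 0%Q | One => Some 1%Q | Cst c => Some c | Var j => Some (coordQ0 j)
  | Add u v =>
      match evalQ0 u, evalQ0 v with Some r, Some s => Some (Qred (r + s)) | _, _ => None end
  | Mul u v =>
      match evalQ0 u, evalQ0 v with Some r, Some s => Some (Qred (r * s)) | _, _ => None end
  | Neg u => match evalQ0 u with Some r => Some (Qred (- r)) | None => None end
  | Inv u =>
      match evalQ0 u with
      | Some r => if Qeq_bool r 0 then None else Some (Qred (/ r))
      | None => None
      end
  | Sqrt u =>
      match evalQ0 u with
      | Some r => if Qeq_bool r (1#4) then Some (1#2) else None
      | None => None
      end
  | Ser k n u =>
      match evalQ0 u with
      | Some r => if Qeq_bool r 0 then sin_psQ0 k n else None
      | None => None
      end
  end.

Lemma sin_psQ0_correct k n r : sin_psQ0 k n = Some r -> sin_ps k n 0 = Q2R r.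
Proof.
  destruct k as [|[|k]], n as [|[|[|n]]]; cbn; intro H; try discriminate; injection H as <-;
    unfold sin_ps; rewrite PSeries_0; simpl PS_derive_iter;
    unfold PS_derive, sin_ps_coef, sinc_coef, sin_defect_coef, sin_n;
    rewrite ?INR_IZR_INZ; simpl Z.of_nat; unfold Q2R; simpl; field.
Qed.

Lemma Q2R_Qred r : Q2R (Qred r) = Q2R r.
Proof. apply Qeq_eqR, Qred_correct. Qed.

Lemma Qeq_bool_Q2R r s : Qeq_bool r s = true -> Q2R r = Q2R s.
Proof. intro H. apply Qeq_eqR, Qeq_bool_iff, H. Qed.

Lemma Q2R_neq0 r : Qeq_bool r 0 = false -> Q2R r <> 0.
Proof.
  intros H Hr. assert (Hq : (r == 0)%Q) by (apply eqR_Qeq; rewrite Hr; unfold Q2R; simpl; ring).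
  apply Qeq_bool_iff in Hq. congruence.
Qed.

Lemma Some_eq {A : Type} (a b : A) : Some a = Some b -> b = a.
Proof. congruence. Qed.

Lemma evalQ0_correct e r : evalQ0 e = Some r -> dom e x0 /\ eval e x0 = Q2R r.
Proof.
  revert r; induction e; intros r H; cbn [evalQ0] in H; cbn [dom eval].
  - apply Some_eq in H; subst r; split; auto. unfold Q2R; simpl; field.
  - apply Some_eq in H; subst r; split; auto. unfold Q2R; simpl; field.
  - apply Some_eq in H; subst r; split; auto.
  - apply Some_eq in H; subst r; split; auto.
    destruct j as [|[|[|[|j]]]]; unfold x0, coordQ0; simpl; unfold Q2R; simpl; field.
  - destruct (evalQ0 e1) as [u|], (evalQ0 e2) as [v|]; try discriminate.
    apply Some_eq in H; subst r. destruct (IHe1 u eq_refl), (IHe2 v eq_refl).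
    split; auto. rewrite Q2R_Qred, Q2R_plus; congruence.
  - destruct (evalQ0 e1) as [u|], (evalQ0 e2) as [v|]; try discriminate.
    apply Some_eq in H; subst r. destruct (IHe1 u eq_refl), (IHe2 v eq_refl).
    split; auto. rewrite Q2R_Qred, Q2R_mult; congruence.
  - destruct (evalQ0 e) as [u|]; [|discriminate].
    apply Some_eq in H; subst r. destruct (IHe u eq_refl).
    split; auto. rewrite Q2R_Qred, Q2R_opp; congruence.
  - destruct (evalQ0 e) as [u|]; [|discriminate].
    destruct (Qeq_bool u 0) eqn:Hu; [discriminate|].
    apply Some_eq in H; subst r. destruct (IHe u eq_refl) as [Hd Hv].
    rewrite Hv. split; [split; [exact Hd|exact (Q2R_neq0 u Hu)]|].
    rewrite Q2R_Qred, Q2R_inv; auto.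
    intro Hc; apply Qeq_bool_iff in Hc; congruence.
  - destruct (evalQ0 e) as [u|]; [|discriminate].
    destruct (Qeq_bool u (1#4)) eqn:Hu; [|discriminate].
    apply Some_eq in H; subst r. destruct (IHe u eq_refl) as [Hd Hv].
    rewrite Hv, (Qeq_bool_Q2R _ _ Hu), Q2R_quarter, Q2R_half.
    split; [split; auto; lra|].
    replace (/ 4) with (/ 2 * / 2) by field. apply sqrt_square. lra.
  - destruct (evalQ0 e) as [u|]; [|discriminate].
    destruct (Qeq_bool u 0) eqn:Hu; [|discriminate].
    destruct (IHe u eq_refl) as [Hd Hv]. split; auto.
    rewrite Hv, (Qeq_bool_Q2R _ _ Hu). replace (Q2R 0) with 0 by (unfold Q2R; simpl; ring).
    apply sin_psQ0_correct, H.
Qed.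

Lemma evalQ0_value e r v : evalQ0 e = Some r -> Q2R r = v -> eval e x0 = v.
Proof. intros H <-. apply (evalQ0_correct e r H). Qed.

(* [grad] is sealed behind [Qed]: conversion problems that unfold [deriv i eRC]
   blow up exponentially. *)
Lemma grad_spec : { g : nat -> expr | forall i, g i = deriv i eRC }.
Proof. exists (fun i => deriv i eRC). reflexivity. Qed.

Definition grad : nat -> expr := proj1_sig grad_spec.

Lemma grad_eq i : grad i = deriv i eRC.
Proof. exact (proj2_sig grad_spec i). Qed.

Definition hess (k j : nat) : expr := deriv j (grad k).
Definition third (k j l : nat) : expr := deriv l (hess k j).

Lemma dom_grad k x : dom eRC x -> dom (grad k) x.
Proof. rewrite grad_eq. apply dom_deriv. Qed.
Lemma dom_hess k j x : dom eRC x -> dom (hess k j) x.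
Proof. intro H. apply dom_deriv, dom_grad, H. Qed.
Lemma dom_third k j l x : dom eRC x -> dom (third k j l) x.
Proof. intro H. apply dom_deriv, dom_hess, H. Qed.

(* Second derivatives of RC at x0; the index 3 is the parameter a. *)
Definition hess0 (k j : nat) : R :=
  match k, j with
  | 0%nat, 0%nat => 48 | 0%nat, 1%nat => -16 | 0%nat, 2%nat => 4/3 | 0%nat, 3%nat => -8
  | 1%nat, 0%nat => -16 | 1%nat, 1%nat => 48 | 1%nat, 2%nat => 4/3 | 1%nat, 3%nat => 8
  | 2%nat, 0%nat => 4/3 | 2%nat, 1%nat => 4/3 | 2%nat, 2%nat => 7/9 | 2%nat, 3%nat => -2/3
  | _, _ => 0
  end.

Lemma dom_eRC_x0 : dom eRC x0.
Proof. apply (proj1 (evalQ0_correct eRC 8%Q ltac:(vm_compute; reflexivity))). Qed.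

Lemma grad_x0 i : (i < 3)%nat -> eval (grad i) x0 = 0.
Proof.
  intro Hi. rewrite grad_eq. destruct i as [|[|[|i]]]; try lia;
    (apply (evalQ0_value _ 0%Q); [vm_compute; reflexivity|unfold Q2R; simpl; field]).
Qed.

Lemma hess_x0 k j : (k < 3)%nat -> (j < 4)%nat -> eval (hess k j) x0 = hess0 k j.
Proof.
  intros Hk Hj. unfold hess. rewrite grad_eq.
  destruct k as [|[|[|k]]]; try lia; destruct j as [|[|[|[|j]]]]; try lia;
    (eapply evalQ0_value; [vm_compute; reflexivity|unfold Q2R, hess0; simpl; field]).
Qed.

Lemma RC_smooth : exists U : pt5 -> Prop, open5 U /\ U x0 /\ smooth_on U RCpt.
Proof.
  exists (dom eRC). split; [apply dom_open5|]. split; [apply dom_eRC_x0|].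
  intro k. apply Ck_local with (eval eRC); [apply dom_open5| |apply eval_Ck; auto].
  intros x Hx; symmetry; apply RCpt_eval, Hx.
Qed.

Lemma partial_RCpt i x : (i < 5)%nat -> dom eRC x -> partial i RCpt x (eval (grad i) x).
Proof.
  intros Hi Hx. apply partial_local with (dom eRC) (eval eRC); auto.
  - apply dom_open5.
  - intros y Hy; symmetry; apply RCpt_eval, Hy.
  - rewrite grad_eq. apply partial_eval; auto.
Qed.

Lemma RC_critical_x0 i : (i < 3)%nat -> partial i RCpt x0 0.
Proof. intro Hi. rewrite <- (grad_x0 i Hi). apply partial_RCpt; [lia|apply dom_eRC_x0]. Qed.

Lemma RC_hessian_x0 : exists (U : pt5 -> Prop) (D : nat -> pt5 -> R),
  open5 U /\ U x0 /\
  (forall i x, (i < 3)%nat -> U x -> partial i RCpt x (D i x)) /\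
  (forall i j, (i < 3)%nat -> (j < 3)%nat -> partial j (D i) x0 (Hess i j)).
Proof.
  exists (dom eRC), (fun i => eval (grad i)).
  split; [apply dom_open5|]. split; [apply dom_eRC_x0|]. split.
  - intros i x Hi Hx. apply partial_RCpt; [lia|exact Hx].
  - intros i j Hi Hj. replace (Hess i j) with (eval (hess i j) x0).
    + apply partial_eval; [lia|apply dom_grad, dom_eRC_x0].
    + rewrite hess_x0 by lia.
      destruct i as [|[|[|i]]], j as [|[|[|j]]]; try lia; reflexivity.
Qed.

(** * Taylor expansion along segments *)

Definition ddir2 (e : expr) (y h : pt5) : R :=
  coord 0 h * ddir (deriv 0 e) y h + coord 1 h * ddir (deriv 1 e) y h
  + coord 2 h * ddir (deriv 2 e) y h + coord 3 h * ddir (deriv 3 e) y h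
  + coord 4 h * ddir (deriv 4 e) y h.

Lemma ddir_line_derive e x h t : dom e (line x h t) ->
  derivable_pt_lim (fun s => ddir e (line x h s) h) t (ddir2 e (line x h t) h).
Proof.
  intro Hd. unfold ddir, ddir2.
  assert (Hj : forall j, derivable_pt_lim (fun s => coord j h * eval (deriv j e) (line x h s)) t
                          (coord j h * ddir (deriv j e) (line x h t) h)).
  { intro j. apply derivable_pt_lim_scal, eval_line_derive, dom_deriv, Hd. }
  repeat apply derivable_pt_lim_plus; auto.
Qed.

Lemma eval_mvt_segment e x h : (forall t, 0 <= t <= 1 -> dom e (line x h t)) ->
  exists c, 0 < c < 1 /\ eval e (line x h 1) - eval e (line x h 0) = ddir e (line x h c) h.
Proof.
  intro Hd.
  destruct (MVT_cor2 (fun s => eval e (line x h s)) (fun s => ddir e (line x h s) h) 0 1)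
    as [c [Hc Hc']]; [lra|intros c Hc; apply eval_line_derive, Hd; auto|].
  exists c; split; auto. rewrite Hc. ring.
Qed.

Lemma eval_taylor2_segment e x h : (forall t, 0 <= t <= 1 -> dom e (line x h t)) ->
  exists c c', 0 < c < 1 /\ 0 < c' < 1 /\
    eval e (line x h 1) - eval e (line x h 0) - ddir e (line x h 0) h
    = c * ddir2 e (line x h c') h.
Proof.
  intro Hd. destruct (eval_mvt_segment e x h Hd) as [c [Hc Hc']].
  destruct (MVT_cor2 (fun s => ddir e (line x h s) h) (fun s => ddir2 e (line x h s) h) 0 c)
    as [c' [Hc1 Hc2]]; [lra|intros s Hs; apply ddir_line_derive, Hd; lra|].
  exists c, c'. split; auto. split; [lra|]. rewrite Hc'. rewrite Rminus_0_r in Hc1. lra.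
Qed.

Lemma segment_near x y d t : dist5 x y < d -> 0 <= t <= 1 -> dist5 x (line x (diff y x) t) < d.
Proof.
  intros Hxy Ht. rewrite dist5_sym. eapply Rle_lt_trans; [|exact Hxy].
  apply dist5_line_convex; [rewrite dist5_sym; apply Rle_refl| |exact Ht].
  rewrite dist5_refl. apply dist5_nonneg.
Qed.

Lemma exprs_near (l : list expr) x eta : 0 < eta -> (forall e, In e l -> dom e x) ->
  exists d, 0 < d /\ forall y, dist5 x y < d ->
    forall e, In e l -> dom e y /\ Rabs (eval e y - eval e x) < eta.
Proof.
  intros Heta. induction l as [|e l IH]; intro Hl.
  - exists 1; split; [lra|]. intros y _ e [].
  - destruct IH as [d1 [H1 H1']]; [intros e' He'; apply Hl; right; auto|].
    assert (Hex : dom e x) by (apply Hl; left; auto).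
    destruct (nbhd_and _ _ x (dom_nbhd e x Hex) (eval_cont5 e x Hex eta Heta)) as [d2 [H2 H2']].
    exists (Rmin d1 d2). split; [apply Rmin_pos; auto|].
    intros y Hy e' [<-|He'].
    + apply H2'. eapply Rlt_le_trans; [exact Hy|apply Rmin_r].
    + apply H1'; auto. eapply Rlt_le_trans; [exact Hy|apply Rmin_l].
Qed.

Lemma exprs_bounded_near (l : list expr) x : (forall e, In e l -> dom e x) ->
  exists d M, 0 < d /\ 0 <= M /\
    forall y, dist5 x y < d -> forall e, In e l -> Rabs (eval e y) <= M.
Proof.
  intro Hl. destruct (exprs_near l x 1 ltac:(lra) Hl) as [d [Hd Hd']].
  exists d. cut (exists M, 0 <= M /\
    forall y, dist5 x y < d -> forall e, In e l -> Rabs (eval e y) <= M).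
  { intros [M HM]. exists M. split; auto. }
  clear Hl. induction l as [|e l IH].
  - exists 0. split; [lra|]. intros y _ e [].
  - destruct IH as [M [HM HM']]; [intros y Hy e' He'; apply Hd'; auto; right; auto|].
    exists (M + Rabs (eval e x) + 1). pose proof (Rabs_pos (eval e x)). split; [lra|].
    intros y Hy e' [<-|He'].
    + destruct (Hd' y Hy e (or_introl eq_refl)) as [_ Hclose].
      pose proof (Rabs_triang_inv (eval e y) (eval e x)). lra.
    + pose proof (HM' y Hy e' He'). lra.
Qed.

Definition hess_list : list expr :=
  flat_map (fun k => map (hess k) (List.seq 0 4)) (List.seq 0 3).
Definition third_list : list expr :=
  flat_map (fun k => flat_map (fun j => map (third k j) (List.seq 0 5)) (List.seq 0 5))
    (List.seq 0 3).

Lemma RC_near_x0 : exists d M, 0 < d /\ 0 <= M /\ forall z, dist5 x0 z < d ->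
  dom eRC z /\
  (forall k j, (k < 3)%nat -> (j < 4)%nat -> Rabs (eval (hess k j) z - hess0 k j) < 1/20) /\
  (forall k j l, (k < 3)%nat -> (j < 5)%nat -> (l < 5)%nat -> Rabs (eval (third k j l) z) <= M).
Proof.
  destruct (exprs_near (eRC :: hess_list) x0 (1/20) ltac:(lra)) as [d1 [Hd1 Hd1']].
  { intros e [<-|He]; [apply dom_eRC_x0|].
    apply in_flat_map in He as [k [_ He]]. apply in_map_iff in He as [j [<- _]].
    apply dom_hess, dom_eRC_x0. }
  destruct (exprs_bounded_near third_list x0) as [d3 [M [Hd3 [HM HM']]]].
  { intros e He. apply in_flat_map in He as [k [_ He]]. apply in_flat_map in He as [j [_ He]].
    apply in_map_iff in He as [l [<- _]]. apply dom_third, dom_eRC_x0. }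
  exists (Rmin d1 d3), M. split; [apply Rmin_pos; auto|]. split; auto.
  intros z Hz.
  assert (Hz1 : dist5 x0 z < d1) by (eapply Rlt_le_trans; [exact Hz|apply Rmin_l]).
  assert (Hz3 : dist5 x0 z < d3) by (eapply Rlt_le_trans; [exact Hz|apply Rmin_r]).
  split; [|split].
  - apply (Hd1' z Hz1 eRC). left; auto.
  - intros k j Hk Hj. rewrite <- hess_x0 by auto. apply (Hd1' z Hz1). right.
    apply in_flat_map. exists k. split; [apply in_seq; lia|].
    apply in_map, in_seq. lia.
  - intros k j l Hk Hj Hl. apply (HM' z Hz3).
    apply in_flat_map. exists k. split; [apply in_seq; lia|].
    apply in_flat_map. exists j. split; [apply in_seq; lia|].
    apply in_map, in_seq. lia.
Qed.

Lemma prod_perturb_bound u w e v eta : Rabs (e - v) < eta ->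
  Rabs (u * (w * e) - v * (u * w)) <= eta * (u * u + w * w) / 2.
Proof.
  intro H. replace (u * (w * e) - v * (u * w)) with ((u * w) * (e - v)) by ring.
  rewrite Rabs_mult.
  assert (Huw : Rabs (u * w) <= (u * u + w * w) / 2).
  { apply Rabs_le. pose proof (Rle_0_sqr (u + w)); pose proof (Rle_0_sqr (u - w)).
    unfold Rsqr in *. split; nra. }
  pose proof (Rabs_pos (e - v)); pose proof (Rabs_pos (u * w)). nra.
Qed.

Definition lin3 (m : nat -> nat -> R) (k : nat) (h0 h1 h2 : R) : R :=
  h0 * m k 0%nat + h1 * m k 1%nat + h2 * m k 2%nat.

Definition qform3 (m : nat -> nat -> R) (h0 h1 h2 : R) : R :=
  h0 * lin3 m 0 h0 h1 h2 + h1 * lin3 m 1 h0 h1 h2 + h2 * lin3 m 2 h0 h1 h2.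

(* [Hess] is positive definite with smallest eigenvalue about 2/3, which absorbs a
   perturbation of each entry by less than 1/20. *)
Lemma hess_perturbed_psd (m : nat -> nat -> R) h0 h1 h2 :
  (forall i j, (i < 3)%nat -> (j < 3)%nat -> Rabs (m i j - hess0 i j) < 1/20) ->
  0 <= qform3 m h0 h1 h2.
Proof.
  intro Hm.
  assert (Hb : forall i j u w, (i < 3)%nat -> (j < 3)%nat ->
            Rabs (u * (w * m i j) - hess0 i j * (u * w)) <= (u * u + w * w) / 40).
  { intros i j u w Hi Hj. eapply Rle_trans; [apply prod_perturb_bound, Hm; auto|lra]. }
  pose proof (Hb 0 0 h0 h0)%nat as H00. pose proof (Hb 0 1 h0 h1)%nat as H01.
  pose proof (Hb 0 2 h0 h2)%nat as H02. pose proof (Hb 1 0 h1 h0)%nat as H10.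
  pose proof (Hb 1 1 h1 h1)%nat as H11. pose proof (Hb 1 2 h1 h2)%nat as H12.
  pose proof (Hb 2 0 h2 h0)%nat as H20. pose proof (Hb 2 1 h2 h1)%nat as H21.
  pose proof (Hb 2 2 h2 h2)%nat as H22. clear Hb Hm.
  repeat match goal with
         | H : (?i < 3)%nat -> _ |- _ => specialize (H ltac:(lia))
         | H : Rabs _ <= _ |- _ => apply Rabs_le_between in H
         end.
  unfold qform3, lin3, hess0 in *.
  pose proof (Rle_0_sqr (h0 + h1 + h2 / 6)). pose proof (Rle_0_sqr (h0 - h1)).
  pose proof (Rle_0_sqr (h0 + h1)). pose proof (Rle_0_sqr h2). unfold Rsqr in *.
  lra.
Qed.

Lemma ddir2_slice e z h m : coord 3 h = 0 -> coord 4 h = 0 ->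
  (forall j l, (j < 3)%nat -> (l < 3)%nat -> eval (deriv l (deriv j e)) z = m j l) ->
  ddir2 e z h = qform3 m (coord 0 h) (coord 1 h) (coord 2 h).
Proof.
  intros h3 h4 Hm. unfold ddir2, ddir, qform3, lin3. rewrite h3, h4, !Rmult_0_l, !Rplus_0_r.
  rewrite !Hm by lia. ring.
Qed.

Lemma RC_local_min : exists d, 0 < d /\ forall x, ca x = 0 -> ceps x = 0 -> dist5 x x0 < d ->
  RCpt x0 <= RCpt x.
Proof.
  destruct RC_near_x0 as [d [M [Hd [_ Hnear]]]].
  exists d. split; auto. intros x Ha He Hx. rewrite dist5_sym in Hx.
  set (h := diff x x0).
  assert (h3 : coord 3 h = 0) by (unfold h; rewrite coord_diff; cbn; rewrite Ha; ring).
  assert (h4 : coord 4 h = 0) by (unfold h; rewrite coord_diff; cbn; rewrite He; ring).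
  assert (Hseg : forall t, 0 <= t <= 1 -> dom eRC (line x0 h t)).
  { intros t Ht. apply Hnear, segment_near; auto. }
  destruct (eval_taylor2_segment eRC x0 h Hseg) as [c [c' [Hc [Hc' Htaylor]]]].
  assert (Hend : line x0 h 1 = x) by apply line_diff1.
  rewrite Hend, line0 in Htaylor.
  rewrite (RCpt_eval x0 dom_eRC_x0), (RCpt_eval x) by (rewrite <- Hend; apply Hseg; lra).
  assert (Hgrad : ddir eRC x0 h = 0).
  { unfold ddir. rewrite <- !grad_eq, !grad_x0 by lia. rewrite h3, h4. ring. }
  assert (Hquad : 0 <= ddir2 eRC (line x0 h c') h).
  { set (z := line x0 h c').
    rewrite (ddir2_slice _ _ _ (fun j l => eval (hess j l) z)) by
      (auto; intros; unfold hess; rewrite grad_eq; reflexivity).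
    apply hess_perturbed_psd. intros i j Hi Hj.
    apply (Hnear _ (segment_near x0 x d c' Hx ltac:(lra))); lia. }
  assert (0 <= c * ddir2 eRC (line x0 h c') h) by (apply Rmult_le_pos; lra).
  lra.
Qed.

(** * Contractions of a slice ball *)

Lemma half_pow_small K eps : 0 <= K -> 0 < eps ->
  exists N, forall n, (n >= N)%nat -> K * (/ 2) ^ n < eps.
Proof.
  intros HK He.
  destruct (pow_lt_1_zero (/ 2) ltac:(rewrite Rabs_right; lra) (eps / (K + 1)))
    as [N HN]; [apply Rdiv_lt_0_compat; lra|].
  exists N. intros n Hn. specialize (HN n Hn).
  rewrite Rabs_right in HN by (apply Rle_ge, pow_le; lra).
  apply Rle_lt_trans with ((K + 1) * (/ 2) ^ n).
  - apply Rmult_le_compat_r; [apply pow_le|]; lra.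
  - apply Rmult_lt_reg_l with (/ (K + 1)); [apply Rinv_0_lt_compat; lra|].
    replace (/ (K + 1) * ((K + 1) * (/ 2) ^ n)) with ((/ 2) ^ n) by (field; lra).
    replace (/ (K + 1) * eps) with (eps / (K + 1)) by (unfold Rdiv; ring). exact HN.
Qed.

Lemma le_of_le_half_pow u v K : 0 <= K -> (forall n, u <= v + K * (/ 2) ^ n) -> u <= v.
Proof.
  intros HK H. apply Rle_plus_epsilon. intros eps He.
  destruct (half_pow_small K eps HK He) as [N HN].
  specialize (H N). specialize (HN N (le_n _)). lra.
Qed.

Definition slice_ball (a r : R) (c x : pt5) : Prop :=
  ca x = a /\ ceps x = 0 /\ dist5 x c <= r.

Section SliceContraction.

Variables (T : pt5 -> pt5) (a r : R) (c : pt5).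
Hypothesis c_in : slice_ball a r c c.
Hypothesis T_maps : forall x, slice_ball a r c x -> slice_ball a r c (T x).
Hypothesis T_contracts : forall x y, slice_ball a r c x -> slice_ball a r c y ->
  dist5 (T x) (T y) <= / 2 * dist5 x y.

Fixpoint iterates (n : nat) : pt5 := match n with O => c | S m => T (iterates m) end.

Lemma iterates_in_ball n : slice_ball a r c (iterates n).
Proof. induction n; simpl; auto. Qed.

Let D := dist5 (iterates 1) (iterates 0).

Lemma iterates_step n : dist5 (iterates (S n)) (iterates n) <= D * (/ 2) ^ n.
Proof.
  induction n; [unfold D; simpl; lra|].
  simpl iterates. eapply Rle_trans;
    [apply T_contracts; [apply (iterates_in_ball (S n))|apply iterates_in_ball]|].
  simpl iterates in IHn. simpl pow. lra.
Qed.

Lemma iterates_cauchy n m : (n <= m)%nat -> dist5 (iterates n) (iterates m) <= 2 * D * (/ 2) ^ n.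
Proof.
  intro Hnm. replace m with (n + (m - n))%nat by lia. generalize (m - n)%nat as k.
  assert (HD : 0 <= D) by apply dist5_nonneg.
  assert (Hpn : 0 <= (/ 2) ^ n) by (apply pow_le; lra).
  intro k. cut (dist5 (iterates n) (iterates (n + k)) <= 2 * D * (/ 2) ^ n * (1 - (/ 2) ^ k)).
  { assert (0 <= D * (/ 2) ^ n * (/ 2) ^ k)
      by (repeat apply Rmult_le_pos; auto; apply pow_le; lra).
    intro. lra. }
  induction k.
  - rewrite Nat.add_0_r, dist5_refl. simpl. lra.
  - eapply Rle_trans; [apply dist5_triang with (y := iterates (n + k))|].
    rewrite dist5_sym with (x := iterates (n + k)), Nat.add_succ_r.
    pose proof (iterates_step (n + k)) as Hstep. rewrite pow_add in Hstep. simpl pow. lra.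
Qed.

Lemma iterates_coord_limit j :
  { l : R | forall n, Rabs (coord j (iterates n) - l) <= 2 * D * (/ 2) ^ n }.
Proof.
  assert (HD : 0 <= D) by apply dist5_nonneg.
  destruct (R_complete (fun n => coord j (iterates n))) as [l Hl].
  - intros eps He. destruct (half_pow_small (2 * D) eps ltac:(lra) He) as [N HN].
    exists N. intros n m Hn Hm. unfold Rdist.
    destruct (Nat.le_ge_cases n m) as [Hle|Hle].
    + eapply Rle_lt_trans; [|apply (HN n Hn)].
      eapply Rle_trans; [apply coord_dist|apply iterates_cauchy; auto].
    + eapply Rle_lt_trans; [|apply (HN m Hm)]. rewrite Rabs_minus_sym.
      eapply Rle_trans; [apply coord_dist|apply iterates_cauchy; auto].
  - exists l. intro n. apply Rle_plus_epsilon. intros eps He.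
    destruct (Hl eps He) as [N HN]. specialize (HN (Nat.max n N) ltac:(lia)). unfold Rdist in HN.
    pose proof (iterates_cauchy n (Nat.max n N) ltac:(lia)).
    pose proof (coord_dist j (iterates n) (iterates (Nat.max n N))).
    replace (coord j (iterates n) - l) with ((coord j (iterates n) - coord j (iterates (Nat.max n N)))
      + (coord j (iterates (Nat.max n N)) - l)) by ring.
    eapply Rle_trans; [apply Rabs_triang|]. lra.
Qed.

Lemma slice_contraction_fixpoint : exists x, slice_ball a r c x /\ T x = x.
Proof.
  assert (HD : 0 <= D) by apply dist5_nonneg.
  destruct (iterates_coord_limit 0) as [l0 H0], (iterates_coord_limit 1) as [l1 H1],
    (iterates_coord_limit 2) as [l2 H2].
  set (xs := mk5 l0 l1 l2 a 0).
  assert (Hd : forall n, dist5 xs (iterates n) <= 2 * D * (/ 2) ^ n).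
  { intro n. destruct (iterates_in_ball n) as [Ha [He _]].
    pose proof (pow_le (/ 2) n ltac:(lra)).
    apply dist5_le; simpl; rewrite Rabs_minus_sym;
      [apply (H0 n)|apply (H1 n)|apply (H2 n)|rewrite Ha|rewrite He];
      rewrite ?Rminus_diag, ?Rabs_R0; nra. }
  assert (Hxs : slice_ball a r c xs).
  { split; [reflexivity|split; [reflexivity|]].
    apply le_of_le_half_pow with (2 * D); [lra|]. intro n.
    eapply Rle_trans; [apply dist5_triang with (y := iterates n)|].
    destruct (iterates_in_ball n) as [_ [_ Hr]]. specialize (Hd n). lra. }
  exists xs. split; auto. apply dist5_le0_eq.
  apply le_of_le_half_pow with (0 + 3 * D); [lra|]. intro n.
  eapply Rle_trans; [apply dist5_triang with (y := iterates (S n))|].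
  pose proof (Hd (S n)) as HS. rewrite dist5_sym in HS. simpl iterates in *. simpl pow in HS.
  pose proof (T_contracts xs (iterates n) Hxs (iterates_in_ball n)). pose proof (Hd n).
  assert (0 <= D * (/ 2) ^ n) by (apply Rmult_le_pos; [|apply pow_le]; lra). lra.
Qed.

End SliceContraction.

(** * The critical point for small a *)

Definition hess_inv (i k : nat) : R :=
  match i, k with
  | 0%nat, 0%nat => 5/192 | 0%nat, 1%nat => 1/96 | 0%nat, 2%nat => -1/16
  | 1%nat, 0%nat => 1/96 | 1%nat, 1%nat => 5/192 | 1%nat, 2%nat => -1/16
  | 2%nat, 0%nat => -1/16 | 2%nat, 1%nat => -1/16 | _, _ => 3/2
  end.

Definition newton_coord (i : nat) (z : pt5) : R :=
  coord i z - lin3 (fun _ k => hess_inv i k) 0 (eval (grad 0) z) (eval (grad 1) z) (eval (grad 2) z).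

Definition newton (a : R) (z : pt5) : pt5 :=
  mk5 (newton_coord 0 z) (newton_coord 1 z) (newton_coord 2 z) a 0.

Lemma newton_move a z F : ca z = a -> ceps z = 0 ->
  (forall k, (k < 3)%nat -> Rabs (eval (grad k) z) <= F) -> dist5 (newton a z) z <= 13/8 * F.
Proof.
  intros Ha He HF.
  pose proof (HF 0%nat ltac:(lia)) as F0. pose proof (HF 1%nat ltac:(lia)) as F1.
  pose proof (HF 2%nat ltac:(lia)) as F2. apply Rabs_le_between in F0, F1, F2.
  apply dist5_le; unfold newton, newton_coord, lin3; cbn [cq cp cth ca ceps coord hess_inv];
    try (rewrite ?Ha, ?He, Rminus_diag, Rabs_R0; lra);
    apply Rabs_le_between; lra.
Qed.

Lemma newton_fixed_iff a z : ca z = a -> ceps z = 0 ->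
  newton a z = z <-> forall k, (k < 3)%nat -> eval (grad k) z = 0.
Proof.
  intros Ha He. split.
  - intros Hz.
    assert (E0 : newton_coord 0 z = cq z) by (rewrite <- Hz at 2; reflexivity).
    assert (E1 : newton_coord 1 z = cp z) by (rewrite <- Hz at 2; reflexivity).
    assert (E2 : newton_coord 2 z = cth z) by (rewrite <- Hz at 2; reflexivity).
    unfold newton_coord, lin3 in E0, E1, E2. cbn [coord hess_inv] in E0, E1, E2.
    intros k Hk; destruct k as [|[|[|k]]]; try lia; lra.
  - intros Hg. destruct z as [q p t a' e']. cbn [ca ceps] in Ha, He. subst a' e'.
    unfold newton, newton_coord, lin3. rewrite !Hg by lia. cbn [coord cq cp cth].
    f_equal; ring.
Qed.

Lemma lin_perturb_bound u m e v eta : Rabs u <= m -> Rabs (e - v) < eta ->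
  Rabs (u * e - u * v) <= eta * m.
Proof.
  intros Hu He. replace (u * e - u * v) with (u * (e - v)) by ring. rewrite Rabs_mult.
  pose proof (Rabs_pos u); pose proof (Rabs_pos (e - v)).
  rewrite Rmult_comm. apply Rmult_le_compat; lra.
Qed.

(* [Hess⁻¹] has row sums of absolute values at most 13/8, so an entrywise perturbation of
   [Hess] by 1/20 leaves [Id - Hess⁻¹ m] with operator sup-norm at most 39/160 < 1/2. *)
Lemma newton_jacobian_small (m : nat -> nat -> R) i h0 h1 h2 d : (i < 3)%nat ->
  (forall k j, (k < 3)%nat -> (j < 3)%nat -> Rabs (m k j - hess0 k j) < 1/20) ->
  Rabs h0 <= d -> Rabs h1 <= d -> Rabs h2 <= d ->
  Rabs (coord i (mk5 h0 h1 h2 0 0)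
        - lin3 (fun _ k => hess_inv i k) 0
            (lin3 m 0 h0 h1 h2) (lin3 m 1 h0 h1 h2) (lin3 m 2 h0 h1 h2)) <= d / 2.
Proof.
  intros Hi Hm H0 H1 H2.
  assert (Hb : forall k j u, (k < 3)%nat -> (j < 3)%nat -> Rabs u <= d ->
            - (d / 20) <= u * m k j - u * hess0 k j <= d / 20).
  { intros k j u Hk Hj Hu. apply Rabs_le_between.
    eapply Rle_trans; [apply lin_perturb_bound, Hm; eauto|lra]. }
  pose proof (Hb 0 0 h0 ltac:(lia) ltac:(lia) H0)%nat. pose proof (Hb 0 1 h1 ltac:(lia) ltac:(lia) H1)%nat.
  pose proof (Hb 0 2 h2 ltac:(lia) ltac:(lia) H2)%nat. pose proof (Hb 1 0 h0 ltac:(lia) ltac:(lia) H0)%nat.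
  pose proof (Hb 1 1 h1 ltac:(lia) ltac:(lia) H1)%nat. pose proof (Hb 1 2 h2 ltac:(lia) ltac:(lia) H2)%nat.
  pose proof (Hb 2 0 h0 ltac:(lia) ltac:(lia) H0)%nat. pose proof (Hb 2 1 h1 ltac:(lia) ltac:(lia) H1)%nat.
  pose proof (Hb 2 2 h2 ltac:(lia) ltac:(lia) H2)%nat. clear Hb Hm.
  apply Rabs_le_between. unfold lin3, hess0 in *.
  destruct i as [|[|[|i]]]; try lia; cbn [coord cq cp cth hess_inv]; split; lra.
Qed.

Definition norm1 (h : pt5) : R :=
  Rabs (coord 0 h) + Rabs (coord 1 h) + Rabs (coord 2 h) + Rabs (coord 3 h) + Rabs (coord 4 h).

Lemma Rabs_sum5_le u0 u1 u2 u3 u4 B :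
  Rabs u0 + Rabs u1 + Rabs u2 + Rabs u3 + Rabs u4 <= B -> Rabs (u0 + u1 + u2 + u3 + u4) <= B.
Proof.
  intro H. pose proof (Rabs_triang (u0 + u1 + u2 + u3) u4).
  pose proof (Rabs_triang (u0 + u1 + u2) u3). pose proof (Rabs_triang (u0 + u1) u2).
  pose proof (Rabs_triang u0 u1). lra.
Qed.

Lemma ddir_bound e y h B : (forall j, (j < 5)%nat -> Rabs (eval (deriv j e) y) <= B) ->
  Rabs (ddir e y h) <= norm1 h * B.
Proof.
  intro HB. unfold ddir, norm1.
  assert (Ht : forall j, (j < 5)%nat ->
            Rabs (coord j h * eval (deriv j e) y) <= Rabs (coord j h) * B).
  { intros j Hj. rewrite Rabs_mult. apply Rmult_le_compat_l; [apply Rabs_pos|auto]. }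
  pose proof (Ht 0%nat ltac:(lia)). pose proof (Ht 1%nat ltac:(lia)).
  pose proof (Ht 2%nat ltac:(lia)). pose proof (Ht 3%nat ltac:(lia)).
  pose proof (Ht 4%nat ltac:(lia)).
  apply Rabs_sum5_le; lra.
Qed.

Lemma ddir2_bound e y h B :
  (forall j l, (j < 5)%nat -> (l < 5)%nat -> Rabs (eval (deriv l (deriv j e)) y) <= B) ->
  Rabs (ddir2 e y h) <= norm1 h * (norm1 h * B).
Proof.
  intro HB. unfold ddir2.
  assert (Ht : forall j, (j < 5)%nat ->
            Rabs (coord j h * ddir (deriv j e) y h) <= Rabs (coord j h) * (norm1 h * B)).
  { intros j Hj. rewrite Rabs_mult. apply Rmult_le_compat_l; [apply Rabs_pos|].
    apply ddir_bound. intros l Hl. apply HB; auto. }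
  pose proof (Ht 0%nat ltac:(lia)). pose proof (Ht 1%nat ltac:(lia)).
  pose proof (Ht 2%nat ltac:(lia)). pose proof (Ht 3%nat ltac:(lia)).
  pose proof (Ht 4%nat ltac:(lia)).
  apply Rabs_sum5_le. unfold norm1 at 1. lra.
Qed.

Lemma slice_ball_line a r c x y t : slice_ball a r c x -> slice_ball a r c y -> 0 <= t <= 1 ->
  slice_ball a r c (line y (diff x y) t).
Proof.
  intros [Hxa [Hxe Hx]] [Hya [Hye Hy]] Ht. split; [|split].
  - unfold line, diff; simpl. rewrite Hxa, Hya. ring.
  - unfold line, diff; simpl. rewrite Hxe, Hye. ring.
  - apply dist5_line_convex; auto.
Qed.

Section CriticalBranch.

Variables (d M a : R).
Hypothesis RC_near : forall z, dist5 x0 z < d ->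
  dom eRC z /\
  (forall k j, (k < 3)%nat -> (j < 4)%nat -> Rabs (eval (hess k j) z - hess0 k j) < 1/20) /\
  (forall k j l, (k < 3)%nat -> (j < 5)%nat -> (l < 5)%nat -> Rabs (eval (third k j l) z) <= M).
Hypothesis M_nonneg : 0 <= M.
Hypothesis a_small : Rabs a < d / 160.

Let r := d / 4.
Let base := mk5 (/ 2) (/ 2) 0 a 0.
(* The first-order ansatz (1/2 + a/12, 1/2 - a/6, a): [Hess] times (1/12, -1/6, 1) cancels
   the mixed derivatives [hess0 k 3] in a. *)
Let ansatz := mk5 (/ 2 + a / 12) (/ 2 - a / 6) a a 0.
Let ball := slice_ball a r base.

Lemma dist5_x0_base : dist5 x0 base <= Rabs a.
Proof.
  apply dist5_le; unfold base, x0; cbn [cq cp cth ca ceps];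
    rewrite ?Rminus_diag, ?Rabs_R0; try apply Rabs_pos.
  rewrite Rminus_0_l, Rabs_Ropp. lra.
Qed.

Lemma ball_near z : ball z -> dist5 x0 z < d.
Proof.
  intros [_ [_ Hz]]. pose proof dist5_x0_base. pose proof (Rabs_pos a).
  eapply Rle_lt_trans; [apply dist5_triang with (y := base)|].
  rewrite dist5_sym in Hz. unfold r in Hz. lra.
Qed.

Lemma grad_increment k x y : (k < 3)%nat -> ball x -> ball y ->
  exists row : nat -> R, (forall j, (j < 3)%nat -> Rabs (row j - hess0 k j) < 1/20) /\
    eval (grad k) x - eval (grad k) y
    = lin3 (fun _ => row) 0 (coord 0 (diff x y)) (coord 1 (diff x y)) (coord 2 (diff x y)).
Proof.
  intros Hk Hx Hy. set (h := diff x y).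
  destruct (eval_mvt_segment (grad k) y h) as [c [Hc Heq]].
  { intros t Ht. apply dom_grad, RC_near, ball_near, slice_ball_line; auto. }
  assert (Hz : dist5 x0 (line y h c) < d) by (apply ball_near, slice_ball_line; auto; lra).
  exists (fun j => eval (hess k j) (line y h c)). split.
  - intros j Hj. apply RC_near; auto; lia.
  - assert (Hend : line y h 1 = x) by apply line_diff1.
    rewrite Hend, line0 in Heq. rewrite Heq.
    destruct Hx as [Hxa [Hxe _]], Hy as [Hya [Hye _]].
    assert (h3 : coord 3 h = 0) by (unfold h; rewrite coord_diff; cbn; rewrite Hxa, Hya; ring).
    assert (h4 : coord 4 h = 0) by (unfold h; rewrite coord_diff; cbn; rewrite Hxe, Hye; ring).
    unfold ddir, lin3, hess. rewrite h3, h4. ring.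
Qed.

Lemma newton_contracts x y : ball x -> ball y -> dist5 (newton a x) (newton a y) <= / 2 * dist5 x y.
Proof.
  intros Hx Hy.
  destruct (grad_increment 0 x y ltac:(lia) Hx Hy) as [row0 [Hr0 E0]].
  destruct (grad_increment 1 x y ltac:(lia) Hx Hy) as [row1 [Hr1 E1]].
  destruct (grad_increment 2 x y ltac:(lia) Hx Hy) as [row2 [Hr2 E2]].
  set (m := fun k => match k with 0%nat => row0 | 1%nat => row1 | _ => row2 end).
  assert (Hm : forall k j, (k < 3)%nat -> (j < 3)%nat -> Rabs (m k j - hess0 k j) < 1/20).
  { intros k j Hk Hj. destruct k as [|[|[|k]]]; try lia; auto. }
  set (h0 := coord 0 (diff x y)) in *. set (h1 := coord 1 (diff x y)) in *.
  set (h2 := coord 2 (diff x y)) in *.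
  assert (Hi : forall i, (i < 3)%nat ->
            Rabs (newton_coord i x - newton_coord i y) <= / 2 * dist5 x y).
  { intros i Hi.
    replace (newton_coord i x - newton_coord i y)
      with (coord i (mk5 h0 h1 h2 0 0) - lin3 (fun _ k => hess_inv i k) 0
              (lin3 m 0 h0 h1 h2) (lin3 m 1 h0 h1 h2) (lin3 m 2 h0 h1 h2)).
    - rewrite Rmult_comm. apply newton_jacobian_small; auto;
        [unfold h0|unfold h1|unfold h2]; rewrite coord_diff; apply coord_dist.
    - change (lin3 m 0 h0 h1 h2) with (lin3 (fun _ => row0) 0 h0 h1 h2).
      change (lin3 m 1 h0 h1 h2) with (lin3 (fun _ => row1) 0 h0 h1 h2).
      change (lin3 m 2 h0 h1 h2) with (lin3 (fun _ => row2) 0 h0 h1 h2).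
      rewrite <- E0, <- E1, <- E2. unfold newton_coord, lin3, h0, h1, h2.
      destruct i as [|[|[|i]]]; try lia; cbn [coord diff cq cp cth]; ring. }
  pose proof (dist5_nonneg x y).
  apply dist5_le; unfold newton; cbn [cq cp cth ca ceps];
    [apply (Hi 0%nat)|apply (Hi 1%nat)|apply (Hi 2%nat)| |]; try lia;
    rewrite Rminus_diag, Rabs_R0; lra.
Qed.

Lemma grad_base_bound k : (k < 3)%nat -> Rabs (eval (grad k) base) <= 9 * Rabs a.
Proof.
  intro Hk. set (h := diff base x0).
  assert (Hd : dist5 x0 base < d) by (pose proof dist5_x0_base; pose proof (Rabs_pos a); lra).
  assert (Hseg : forall t, 0 <= t <= 1 -> dist5 x0 (line x0 h t) < d)
    by (intros; apply segment_near; auto).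
  destruct (eval_mvt_segment (grad k) x0 h) as [c [Hc Heq]].
  { intros t Ht. apply dom_grad, RC_near, Hseg, Ht. }
  assert (Hend : line x0 h 1 = base) by apply line_diff1.
  rewrite Hend, line0, grad_x0, Rminus_0_r in Heq by auto. rewrite Heq.
  destruct (RC_near _ (Hseg c ltac:(lra))) as [_ [Hhess _]].
  pose proof (Hhess k 3%nat Hk ltac:(lia)) as H3. unfold hess in H3.
  assert (Hddir : ddir (grad k) (line x0 h c) h = a * eval (deriv 3 (grad k)) (line x0 h c)).
  { unfold ddir, h, base, x0; rewrite !coord_diff; cbn [coord cq cp cth ca ceps]. ring. }
  rewrite Hddir, Rabs_mult, Rmult_comm. apply Rmult_le_compat_r; [apply Rabs_pos|].
  assert (Rabs (hess0 k 3) <= 8)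
    by (destruct k as [|[|[|k]]]; try lia; unfold hess0; apply Rabs_le; lra).
  pose proof (Rabs_triang_inv (eval (deriv 3 (grad k)) (line x0 h c)) (hess0 k 3)). lra.
Qed.

Lemma base_in_ball : ball base.
Proof.
  split; [reflexivity|split; [reflexivity|]]. rewrite dist5_refl.
  pose proof (Rabs_pos a). unfold r. lra.
Qed.

Lemma newton_base_move : dist5 (newton a base) base <= 15 * Rabs a.
Proof.
  eapply Rle_trans; [apply newton_move with (F := 9 * Rabs a); auto; apply grad_base_bound|].
  pose proof (Rabs_pos a). lra.
Qed.

Lemma newton_into_ball x : ball x -> dist5 (newton a x) base <= / 2 * r + 15 * Rabs a.
Proof.
  intro Hx. eapply Rle_trans; [apply dist5_triang with (y := newton a base)|].
  pose proof (newton_contracts x base Hx base_in_ball). pose proof newton_base_move.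
  destruct Hx as [_ [_ Hx]]. pose proof (Rabs_pos a). lra.
Qed.

Lemma newton_maps_ball x : ball x -> ball (newton a x).
Proof.
  intro Hx. split; [reflexivity|split; [reflexivity|]].
  pose proof (newton_into_ball x Hx). pose proof (Rabs_pos a). unfold r in *. lra.
Qed.

Lemma dist5_x0_ansatz : dist5 x0 ansatz <= Rabs a.
Proof.
  pose proof (Rabs_pos a).
  apply dist5_le; unfold ansatz, x0; cbn [cq cp cth ca ceps];
    rewrite ?Rminus_diag, ?Rabs_R0, ?Rminus_0_l, ?Rabs_Ropp; try lra;
    [replace (/ 2 - (/ 2 + a / 12)) with (- (a * / 12)) by field;
     rewrite Rabs_Ropp, Rabs_mult, (Rabs_right (/ 12)) by lra
    |replace (/ 2 - (/ 2 - a / 6)) with (a * / 6) by field;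
     rewrite Rabs_mult, (Rabs_right (/ 6)) by lra]; lra.
Qed.

Lemma norm1_ansatz_step : norm1 (diff ansatz x0) = 9 / 4 * Rabs a.
Proof.
  unfold norm1, ansatz, x0; rewrite !coord_diff; cbn [coord cq cp cth ca ceps].
  replace (/ 2 + a / 12 - / 2) with (a * / 12) by field.
  replace (/ 2 - a / 6 - / 2) with (a * - / 6) by field.
  rewrite !Rminus_0_r, Rabs_R0, !Rabs_mult, Rabs_Ropp,
    (Rabs_right (/ 12)), (Rabs_right (/ 6)) by lra.
  field.
Qed.

Lemma grad_ansatz_bound k : (k < 3)%nat -> Rabs (eval (grad k) ansatz) <= 6 * M * a ^ 2.
Proof.
  intro Hk. set (h := diff ansatz x0).
  assert (Hd : dist5 x0 ansatz < d)
    by (pose proof dist5_x0_ansatz; pose proof (Rabs_pos a); lra).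
  assert (Hseg : forall t, 0 <= t <= 1 -> dist5 x0 (line x0 h t) < d)
    by (intros; apply segment_near; auto).
  destruct (eval_taylor2_segment (grad k) x0 h) as [c [c' [Hc [Hc' Heq]]]].
  { intros t Ht. apply dom_grad, RC_near, Hseg, Ht. }
  assert (Hend : line x0 h 1 = ansatz) by apply line_diff1.
  rewrite Hend, line0, grad_x0 in Heq by auto.
  assert (Hlin : ddir (grad k) x0 h = 0).
  { unfold ddir. fold (hess k 0) (hess k 1) (hess k 2) (hess k 3). rewrite !hess_x0 by lia.
    unfold h, ansatz, x0; rewrite !coord_diff; cbn [coord cq cp cth ca ceps].
    destruct k as [|[|[|k]]]; try lia; unfold hess0; field. }
  assert (Hsecond : Rabs (ddir2 (grad k) (line x0 h c') h) <= norm1 h * (norm1 h * M)).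
  { apply ddir2_bound. intros j l Hj Hl.
    apply (RC_near _ (Hseg c' ltac:(lra))); auto. }
  assert (Ha2 : a ^ 2 = Rabs a * Rabs a) by (rewrite <- Rabs_mult, Rabs_right; nra).
  rewrite (norm1_ansatz_step : norm1 h = _) in Hsecond. rewrite Hlin, !Rminus_0_r in Heq. rewrite Heq, Rabs_mult,
    (Rabs_right c) by lra.
  pose proof (Rabs_pos (ddir2 (grad k) (line x0 h c') h)).
  assert (0 <= Rabs a * Rabs a) by (apply Rmult_le_pos; apply Rabs_pos).
  nra.
Qed.

Lemma ansatz_in_ball : ball ansatz.
Proof.
  split; [reflexivity|split; [reflexivity|]]. pose proof (Rabs_pos a).
  apply dist5_le; unfold ansatz, base; cbn [cq cp cth ca ceps];
    rewrite ?Rminus_diag, ?Rabs_R0, ?Rminus_0_r; unfold r; try lra;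
    [replace (/ 2 + a / 12 - / 2) with (a * / 12) by field;
     rewrite Rabs_mult, (Rabs_right (/ 12)) by lra
    |replace (/ 2 - a / 6 - / 2) with (a * - / 6) by field;
     rewrite Rabs_mult, Rabs_Ropp, (Rabs_right (/ 6)) by lra]; lra.
Qed.

Lemma fixpoint_near_ansatz x : ball x -> newton a x = x -> dist5 x ansatz <= 20 * M * a ^ 2.
Proof.
  intros Hx Hfix.
  pose proof (newton_contracts x ansatz Hx ansatz_in_ball) as Hcontr. rewrite Hfix in Hcontr.
  assert (Hmove : dist5 (newton a ansatz) ansatz <= 13/8 * (6 * M * a ^ 2))
    by (apply newton_move; auto; apply grad_ansatz_bound).
  pose proof (dist5_triang x (newton a ansatz) ansatz).
  pose proof (pow2_ge_0 a). assert (0 <= M * a ^ 2) by (apply Rmult_le_pos; auto). lra.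
Qed.

Lemma critical_branch : exists x, crit_a a x /\ dist5 x base < r /\
  Rabs (cq x - / 2 - a / 12) <= 20 * M * a ^ 2 /\
  Rabs (cp x - / 2 + a / 6) <= 20 * M * a ^ 2 /\
  Rabs (cth x - a) <= 20 * M * a ^ 2 /\
  (forall y, crit_a a y -> dist5 y base < r -> y = x).
Proof.
  destruct (slice_contraction_fixpoint (newton a) a r base base_in_ball newton_maps_ball
              newton_contracts) as [xs [Hxs Hfix]].
  pose proof Hxs as [Hxa [Hxe _]].
  assert (Hgrad : forall k, (k < 3)%nat -> eval (grad k) xs = 0)
    by (apply (newton_fixed_iff a); auto).
  pose proof (fixpoint_near_ansatz xs Hxs Hfix) as Hans.
  exists xs. split; [|split; [|split; [|split; [|split]]]].
  - split; [exact Hxa|split; [exact Hxe|]]. intros i Hi.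
    rewrite <- (Hgrad i Hi). apply partial_RCpt; [lia|apply RC_near, ball_near, Hxs].
  - rewrite <- Hfix. pose proof (newton_into_ball xs Hxs). pose proof (Rabs_pos a).
    unfold r in *. lra.
  - replace (cq xs - / 2 - a / 12) with (coord 0 xs - coord 0 ansatz) by (cbn; ring).
    eapply Rle_trans; [apply coord_dist|exact Hans].
  - replace (cp xs - / 2 + a / 6) with (coord 1 xs - coord 1 ansatz) by (cbn; ring).
    eapply Rle_trans; [apply coord_dist|exact Hans].
  - replace (cth xs - a) with (coord 2 xs - coord 2 ansatz) by (cbn; ring).
    eapply Rle_trans; [apply coord_dist|exact Hans].
  - intros y [Hya [Hye Hcrit]] Hy.
    assert (Hyb : ball y) by (split; auto; split; auto; lra).
    assert (Hgy : forall k, (k < 3)%nat -> eval (grad k) y = 0).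
    { intros k Hk. apply (uniqueness_limite (fun h => RCpt (shift k h y)) 0).
      - apply partial_RCpt; [lia|apply RC_near, ball_near, Hyb].
      - apply Hcrit, Hk. }
    apply (newton_fixed_iff a y Hya Hye) in Hgy.
    pose proof (newton_contracts xs y Hxs Hyb) as Hcontr. rewrite Hfix, Hgy in Hcontr.
    pose proof (dist5_nonneg xs y). symmetry. apply dist5_le0_eq. lra.
Qed.

End CriticalBranch.

Lemma RC_critical_branch : exists a0 d C, 0 < a0 /\ 0 < d /\
  forall a, Rabs a < a0 ->
    exists x, crit_a a x /\ dist5 x (mk5 (/ 2) (/ 2) 0 a 0) < d /\
      Rabs (cq x - / 2 - a / 12) <= C * a ^ 2 /\
      Rabs (cp x - / 2 + a / 6) <= C * a ^ 2 /\
      Rabs (cth x - a) <= C * a ^ 2 /\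
      (forall y, crit_a a y -> dist5 y (mk5 (/ 2) (/ 2) 0 a 0) < d -> y = x).
Proof.
  destruct RC_near_x0 as [d [M [Hd [HM Hnear]]]].
  exists (d / 160), (d / 4), (20 * M). split; [lra|]. split; [lra|].
  intros a Ha. exact (critical_branch d M a Hnear HM Ha).
Qed.

Theorem mainTheorem6 :
  (exists U : pt5 -> Prop, open5 U /\ U x0 /\ smooth_on U RCpt) /\
  (forall i, (i < 3)%nat -> partial i RCpt x0 0) /\
  (exists (U : pt5 -> Prop) (D : nat -> pt5 -> R),
      open5 U /\ U x0 /\
      (forall i x, (i < 3)%nat -> U x -> partial i RCpt x (D i x)) /\
      (forall i j, (i < 3)%nat -> (j < 3)%nat -> partial j (D i) x0 (Hess i j))) /\
  (exists d, 0 < d /\ forall x, ca x = 0 -> ceps x = 0 -> dist5 x x0 < d ->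
      RCpt x0 <= RCpt x) /\
  (exists a0 d C, 0 < a0 /\ 0 < d /\
     forall a, Rabs a < a0 ->
       exists x, crit_a a x /\ dist5 x (mk5 (/2) (/2) 0 a 0) < d /\
         Rabs (cq x - / 2 - a / 12) <= C * a ^ 2 /\
         Rabs (cp x - / 2 + a / 6) <= C * a ^ 2 /\
         Rabs (cth x - a) <= C * a ^ 2 /\
         (forall y, crit_a a y -> dist5 y (mk5 (/2) (/2) 0 a 0) < d -> y = x)).
Proof.
  split; [exact RC_smooth|].
  split; [exact RC_critical_x0|].
  split; [exact RC_hessian_x0|].
  split; [exact RC_local_min|].
  exact RC_critical_branch.
Qed.
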